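(* Let $d\ge1$, let $\mu_0:\mathbb{Z}^d\to[0,\infty)$ have finite support, and let $x_1,x_2,\ldots\in\mathbb{Z}^d$ be a sequence in which every $x\in\mathbb{Z}^d$ appears infinitely often. Define $\mu_k=T_{x_k}\cdots T_{x_1}\mu_0$ and $u_k(y)=\sum_{j\le k:\,x_j=y}\max(\mu_{j-1}(y)-1,0)$ (the total mass emitted from $y$ during the first $k$ topplings). Then as $k\to\infty$, $u_k\uparrow u$ pointwise for some finite function $u$, and $\mu_k\to\mu$ pointwise, where \[ \mu=\mu_0+\Delta u\le 1. \]
   Context: For a mass distribution $\mu:\mathbb{Z}^d\to[0,\infty)$ and $x\in\mathbb{Z}^d$, the toppling operator is $T_x\mu=\mu+\alpha\,\Delta\delta_x$ with $\alpha=\max(\mu(x)-1,0)$: if $\mu(x)>1$ the excess $\mu(x)-1$ is split equally among the $2d$ lattice neighbors of $x$ and $x$ keeps mass $1$. $\Delta f(x)=\frac1{2d}\sum_{y\sim x}f(y)-f(x)$ is the discrete Laplacian and $\delta_x$ the indicator of $\{x\}$. *)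

From Stdlib Require Import Reals.
From mathcomp Require Import all_boot all_algebra.
Set Implicit Arguments. Unset Strict Implicit. Unset Printing Implicit Defensive.

Definition pt (d : nat) := {ffun 'I_d -> int}.

Definition shift (d : nat) (x : pt d) (i : 'I_d) (s : int) : pt d :=
  [ffun j => if j == i then (x j + s)%R else x j].

Definition lap (d : nat) (f : pt d -> R) (x : pt d) : R :=
  Rminus (Rmult (Rinv (INR (2 * d)))
     (\big[Rplus/R0]_(i < d) Rplus (f (shift x i 1%R)) (f (shift x i (-1)%R))))
    (f x).

Definition delta (d : nat) (x : pt d) : pt d -> R :=
  fun y => if y == x then R1 else R0.

Definition alpha (d : nat) (mu : pt d -> R) (x : pt d) : R := Rmax (Rminus (mu x) R1) R0.

Definition topple (d : nat) (x : pt d) (mu : pt d -> R) : pt d -> R :=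
  fun y => Rplus (mu y) (Rmult (alpha mu x) (lap (delta x) y)).

(* The toppling sequence x_1, x_2, ... is given as xs : nat -> pt d with
   x_{k+1} = xs k.  mu_seq k = mu_k = T_{x_k} ... T_{x_1} mu_0. *)
Fixpoint mu_seq (d : nat) (mu0 : pt d -> R) (xs : nat -> pt d) (k : nat)
  : pt d -> R :=
  match k with
  | O => mu0
  | S k' => topple (xs k') (mu_seq mu0 xs k')
  end.

Fixpoint u_seq (d : nat) (mu0 : pt d -> R) (xs : nat -> pt d) (k : nat)
  : pt d -> R :=
  match k with
  | O => fun _ => R0
  | S k' => fun y => Rplus (u_seq mu0 xs k' y)
                      (if y == xs k' then alpha (mu_seq mu0 xs k') y else R0)
  end.

From Stdlib Require Import Reals Lra.
From HB Require Import structures.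
From mathcomp Require Import all_boot all_algebra.
Set Implicit Arguments. Unset Strict Implicit. Unset Printing Implicit Defensive.

Open Scope R_scope.

(* Toppling is linear in the emitted amounts, so mu_k = mu_0 + Delta u_k for the
   odometer u_k (odometer_identity).  As u_k is nondecreasing, the whole theorem
   reduces to a uniform bound on u_k (u_bounded): then u_k converges to some u,
   mu_k converges to mu_0 + Delta u because Delta f(x) only involves finitely many
   values of f, and the limit is <= 1 since each site is toppled infinitely often
   and holds mass <= 1 right after each of its topplings.

   The bound rests on the weighted mass identity (summation by parts on the finite
   set of visited sites): sum mu_k g = sum mu_0 g + sum_{j<k} alpha_j Delta g(x_j).
   For g = 1 it gives conservation of the total mass M; for g = |z|^2, where
   Delta g = 1, it bounds all emitted mass, hence u_k, by the second moment of mu_k.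
   It thus remains to confine mu_k to a fixed ball.  Occupied sites (u_k > 0) carry
   mass >= 1, mass lives only on s0 and next to occupied sites, and the occupied set
   meets every l1 shell between s0 and any occupied site; an occupied site at
   distance > n beyond s0 would thus force n units of mass, so n <= M. *)

Definition intR (a : int) : R :=
  match a with Posz n => INR n | Negz n => - INR n.+1 end.

Lemma intR_oppn n : intR (- (n%:Z))%R = - INR n.
Proof. by case: n => [|n] //=; rewrite Ropp_0. Qed.

Lemma intR_add1 a : intR (a + 1)%R = intR a + 1.
Proof.
case: a => n; first by rewrite -PoszD addn1; exact: S_INR.
have -> : (Negz n + 1 = - n%:Z)%R.
  by rewrite NegzE -addn1 PoszD GRing.opprD GRing.addrNK.
rewrite intR_oppn; change (intR (Negz n)) with (- INR n.+1); rewrite S_INR; lra.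
Qed.

Lemma intR_sub1 a : intR (a + (-1))%R = intR a - 1.
Proof. have := intR_add1 (a + (-1))%R; rewrite GRing.addrNK; lra. Qed.

Lemma intR_sqr a : intR a * intR a = INR `|a|%N * INR `|a|%N.
Proof. by case: a => n //=; ring. Qed.

Lemma shiftE d (x : pt d) i s j :
  shift x i s j = if j == i then (x j + s)%R else x j.
Proof. by rewrite /shift ffunE. Qed.

Lemma shiftK d (x : pt d) i s : shift (shift x i s) i (- s)%R = x.
Proof. by apply/ffunP => j; rewrite !shiftE; case: eqP => // ->; rewrite GRing.addrK. Qed.

Lemma shift_eq d (z x : pt d) i s : (shift z i s == x) = (z == shift x i (- s)%R).
Proof.
apply/eqP/eqP => [<-|->]; first by rewrite shiftK.
by have := shiftK x i (- s)%R; rewrite GRing.opprK.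
Qed.

Lemma shift_neq d (x : pt d) i s : s != 0%R -> shift x i s != x.
Proof.
move=> hs; apply/eqP => /ffunP /(_ i); rewrite shiftE eqxx => /eqP.
by rewrite -{2}(GRing.addr0 (x i)) (inj_eq (GRing.addrI _)) (negbTE hs).
Qed.

Lemma Rplus_assoc_law : associative Rplus.
Proof. by move=> x y z; rewrite Rplus_assoc. Qed.
HB.instance Definition _ :=
  Monoid.isComLaw.Build R R0 Rplus Rplus_assoc_law Rplus_comm Rplus_0_l.

Notation "\rsum_ ( i <- r ) F" := (\big[Rplus/R0]_(i <- r) F)
  (at level 36, F at level 36, i, r at level 50).

Lemma sumRM (I : Type) (r : seq I) (F : I -> R) c :
  \rsum_(i <- r) (c * F i) = c * \rsum_(i <- r) F i.
Proof. by elim: r => [|a r IH]; rewrite ?big_nil ?big_cons ?IH; ring. Qed.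

Lemma sumRMr (I : Type) (r : seq I) (F : I -> R) c :
  \rsum_(i <- r) (F i * c) = (\rsum_(i <- r) F i) * c.
Proof. by elim: r => [|a r IH]; rewrite ?big_nil ?big_cons ?IH; ring. Qed.

Lemma sumRD (I : Type) (r : seq I) (F G : I -> R) :
  \rsum_(i <- r) (F i + G i) = \rsum_(i <- r) F i + \rsum_(i <- r) G i.
Proof. by elim: r => [|a r IH]; rewrite ?big_nil ?big_cons ?IH; ring. Qed.

Lemma sumRB (I : Type) (r : seq I) (F G : I -> R) :
  \rsum_(i <- r) (F i - G i) = \rsum_(i <- r) F i - \rsum_(i <- r) G i.
Proof. by elim: r => [|a r IH]; rewrite ?big_nil ?big_cons ?IH; ring. Qed.

Lemma sumR_le (I : Type) (r : seq I) (F G : I -> R) :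
  (forall i, F i <= G i) -> \rsum_(i <- r) F i <= \rsum_(i <- r) G i.
Proof.
by move=> h; elim: r => [|a r IH]; rewrite ?big_nil ?big_cons; [lra | have := h a; lra].
Qed.

Lemma sumR_ge0 (I : Type) (r : seq I) (F : I -> R) :
  (forall i, 0 <= F i) -> 0 <= \rsum_(i <- r) F i.
Proof.
by move=> h; elim: r => [|a r IH]; rewrite ?big_nil ?big_cons; [lra | have := h a; lra].
Qed.

Lemma sumR_const_ord n c : \big[Rplus/R0]_(i < n) c = INR n * c.
Proof.
rewrite big_const_ord; elim: n => [|n IH] /=; first ring.
by rewrite IH; case: n {IH} => [|n] /=; ring.
Qed.

Lemma sumR_ge_term (I : eqType) (r : seq I) (F : I -> R) i :
  uniq r -> i \in r -> (forall j, 0 <= F j) -> F i <= \rsum_(j <- r) F j.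
Proof.
move=> ur ir h; rewrite (bigD1_seq i) //=.
have : 0 <= \big[Rplus/R0]_(j <- r | j != i) F j.
  by rewrite big_mkcond /=; apply: sumR_ge0 => j; case: (j != i) => //; lra.
lra.
Qed.

Lemma sumR_supp (I : eqType) (r s : seq I) (F : I -> R) : uniq r ->
  (forall i, F i <> 0 -> i \in s) -> {subset s <= r} ->
  \rsum_(i <- r) F i = \rsum_(i <- undup s) F i.
Proof.
move=> ur hF hsr; rewrite (bigID (fun i => i \in s)) /=.
rewrite [X in _ + X]big1 => [|i /= hi]; last first.
  by case: (Req_dec (F i) 0) => // /hF h; rewrite h in hi.
rewrite Rplus_0_r -big_filter; apply: perm_big; apply: uniq_perm.
- exact: filter_uniq.
- exact: undup_uniq.
- by move=> i; rewrite mem_filter mem_undup; case: (boolP (i \in s)) => // /hsr ->.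
Qed.

Lemma lap_ext d (f g : pt d -> R) x : (forall z, f z = g z) -> lap f x = lap g x.
Proof. by move=> h; rewrite /lap h; congr (_ * _ - _); apply: eq_bigr => i _; rewrite !h. Qed.

Lemma lap_lin d (f h : pt d -> R) c x :
  lap (fun z => f z + c * h z) x = lap f x + c * lap h x.
Proof.
rewrite /lap.
have -> : \big[Rplus/R0]_(i < d) (f (shift x i 1%R) + c * h (shift x i 1%R) +
     (f (shift x i (-1)%R) + c * h (shift x i (-1)%R))) =
   \big[Rplus/R0]_(i < d) (f (shift x i 1%R) + f (shift x i (-1)%R)) +
   c * \big[Rplus/R0]_(i < d) (h (shift x i 1%R) + h (shift x i (-1)%R)).
  by rewrite -sumRM -sumRD; apply: eq_bigr => i _; ring.
ring.
Qed.

Lemma mean_const d c : (0 < d)%N -> / INR (2 * d) * (INR d * c) = c / 2.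
Proof.
move=> hd; have hd0 : INR d <> 0 by apply: not_0_INR => e; rewrite e in hd.
by rewrite -multE mult_INR; simpl INR; field.
Qed.

Lemma lap_const d (c : R) x : (0 < d)%N -> lap (fun _ : pt d => c) x = 0.
Proof. by move=> hd; rewrite /lap sumR_const_ord mean_const //; field. Qed.

Definition sqnorm d (z : pt d) : R := \big[Rplus/R0]_(i < d) (intR (z i) * intR (z i)).

Lemma sqnorm_ge0 d (z : pt d) : 0 <= sqnorm z.
Proof. by apply: sumR_ge0 => i; exact: Rle_0_sqr. Qed.

Lemma sqnorm_shift d (x : pt d) i s : sqnorm (shift x i s) =
  sqnorm x + (intR (x i + s)%R * intR (x i + s)%R - intR (x i) * intR (x i)).
Proof.
set D := (_ - _); have -> : D = \big[Rplus/R0]_(j < d) (if j == i then D else 0).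
  by rewrite -big_mkcond /= big_pred1_eq.
rewrite /sqnorm -sumRD; apply: eq_bigr => j _; rewrite shiftE.
by case: eqP => [->|_]; rewrite /D; ring.
Qed.

Lemma lap_sqnorm d x : (0 < d)%N -> lap (@sqnorm d) x = 1.
Proof.
move=> hd; rewrite /lap.
under eq_bigr => i _ do rewrite !sqnorm_shift intR_add1 intR_sub1.
have -> : \big[Rplus/R0]_(i < d)
    (sqnorm x + ((intR (x i) + 1) * (intR (x i) + 1) - intR (x i) * intR (x i)) +
     (sqnorm x + ((intR (x i) - 1) * (intR (x i) - 1) - intR (x i) * intR (x i)))) =
    \big[Rplus/R0]_(i < d) (2 * sqnorm x + 2).
  by apply: eq_bigr => i _; ring.
by rewrite sumR_const_ord mean_const //; field.
Qed.

Definition nbh d (x : pt d) : seq (pt d) :=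
  x :: flatten [seq [:: shift x i 1%R; shift x i (-1)%R] | i <- enum 'I_d].

Lemma nbh_self d (x : pt d) : x \in nbh x.
Proof. by rewrite in_cons eqxx. Qed.

Lemma nbh_shift d (x : pt d) i s : (s = 1 \/ s = -1)%R -> shift x i s \in nbh x.
Proof.
move=> hs; rewrite in_cons; apply/orP; right; apply/flatten_mapP.
by exists i; rewrite ?mem_enum // !in_cons; case: hs => ->; rewrite eqxx ?orbT.
Qed.

Lemma nbhP d (x z : pt d) : z \in nbh x ->
  z = x \/ exists i s, (s = 1 \/ s = -1)%R /\ z = shift x i s.
Proof.
rewrite in_cons => /orP [/eqP -> | /flatten_mapP [i _]]; first by left.
rewrite !in_cons orbF => /orP [] /eqP ->; right; exists i.
  by exists 1%R; split => //; left.
by exists (-1)%R; split => //; right.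
Qed.

Lemma delta_ge0 d (x z : pt d) : 0 <= delta x z.
Proof. by rewrite /delta; case: eqP => _; lra. Qed.

Lemma delta_shift d (x z : pt d) i s : delta x (shift z i s) = delta (shift x i (- s)%R) z.
Proof. by rewrite /delta shift_eq. Qed.

Lemma lap_delta_self d (x : pt d) : lap (delta x) x = -1.
Proof.
rewrite /lap /delta eqxx big1 => [|i _]; first ring.
by rewrite !(negbTE (shift_neq _ _ _)) //; ring.
Qed.

Lemma lap_delta_ge0 d (x z : pt d) : z != x -> 0 <= lap (delta x) z.
Proof.
move=> hz; rewrite /lap {3}/delta (negbTE hz) Rminus_0_r.
apply: Rmult_le_pos; last first.
  by apply: sumR_ge0 => i; have := delta_ge0 x (shift z i 1%R);
     have := delta_ge0 x (shift z i (-1)%R); lra.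
case: d {x z hz} => [|d]; first by rewrite muln0 /= Rinv_0; lra.
by apply/Rlt_le/Rinv_0_lt_compat/lt_0_INR/ltP; rewrite muln_gt0.
Qed.

Lemma lap_delta_out d (x z : pt d) : z \notin nbh x -> lap (delta x) z = 0.
Proof.
move=> hz; have hne y : y \in nbh x -> (z == y) = false.
  by move=> hy; apply/negbTE; apply: contra hz => /eqP ->.
rewrite /lap {3}/delta hne ?nbh_self // big1 => [|i _]; first ring.
rewrite !delta_shift /delta GRing.opprK !hne ?nbh_shift //; by [lra | left | right].
Qed.

Lemma sum_delta d (T : seq (pt d)) a (g : pt d -> R) :
  uniq T -> a \in T -> \rsum_(z <- T) (delta a z * g z) = g a.
Proof.
move=> uT aT; rewrite (bigD1_seq a) //= /delta eqxx big1 => [|z /negbTE ->]; ring.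
Qed.

Lemma sum_lap_delta d (T : seq (pt d)) x g : uniq T -> {subset nbh x <= T} ->
  \rsum_(z <- T) (lap (delta x) z * g z) = lap g x.
Proof.
move=> uT hT; have xT := hT _ (nbh_self x).
have hTs i s : (s = 1 \/ s = -1)%R -> shift x i s \in T by move=> hs; exact/hT/nbh_shift.
rewrite /lap.
transitivity (/ INR (2*d) * \rsum_(z <- T) (\big[Rplus/R0]_(i < d)
   (delta x (shift z i 1%R) * g z + delta x (shift z i (-1)%R) * g z))
   - \rsum_(z <- T) (delta x z * g z)).
  under eq_bigr => z _ do rewrite Rmult_minus_distr_r Rmult_assoc.
  rewrite sumRB sumRM; congr (_ * _ - _); apply: eq_bigr => z _.
  by rewrite -sumRMr; apply: eq_bigr => i _; ring.
rewrite (sum_delta _ uT xT) exchange_big /=.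
congr (_ * _ - _); apply: eq_bigr => i _.
rewrite sumRD; under eq_bigr => z _ do rewrite delta_shift.
under [X in _ + X = _]eq_bigr => z _ do rewrite delta_shift.
rewrite !sum_delta ?GRing.opprK ?hTs //; [exact: Rplus_comm | by left | by right].
Qed.

Definition l1norm d (z : pt d) : nat := (\sum_(i < d) `|z i|)%N.

Lemma coord_le_l1norm d (z : pt d) i : (`|z i| <= l1norm z)%N.
Proof. by rewrite /l1norm (bigD1 i) //= leq_addr. Qed.

Lemma l1norm_nbh d (x z : pt d) : z \in nbh x -> (l1norm z <= l1norm x + 1)%N.
Proof.
case/nbhP => [->|[i [s [hs ->]]]]; first exact: leq_addr.
rewrite /l1norm (bigD1 i) //= [X in (_ <= X + _)%N](bigD1 i) //= shiftE eqxx.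
rewrite (eq_bigr (fun j => `|x j|)) => [|j /negbTE hj]; last by rewrite shiftE hj.
rewrite addnAC leq_add2r addnC.
have := leqD_dist (x i + s) (x i) 0; rewrite !GRing.subr0.
have -> : (x i + s - x i = s)%R by rewrite GRing.addrC GRing.addKr.
by case: hs => ->.
Qed.

Lemma sqnorm_le_l1norm d (z : pt d) : sqnorm z <= INR d * (INR (l1norm z) * INR (l1norm z)).
Proof.
rewrite /sqnorm -sumR_const_ord; apply: sumR_le => i; rewrite intR_sqr.
have h : INR `|z i| <= INR (l1norm z) by apply/le_INR/leP; exact: coord_le_l1norm.
have := pos_INR `|z i|; nra.
Qed.

Lemma shells_mass_lb d (T : seq (pt d)) (f : pt d -> R) a L : uniq T ->
  (forall z, 0 <= f z) ->
  (forall r, (a <= r < a + L)%N -> exists2 z, z \in T & l1norm z = r /\ 1 <= f z) ->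
  INR L <= \rsum_(z <- T) f z.
Proof.
move=> uT hf; pose F l z := if (a <= l1norm z < a + l)%N then f z else 0.
suff F_lb l : (forall r, (a <= r < a + l)%N ->
    exists2 z, z \in T & l1norm z = r /\ 1 <= f z) -> INR l <= \rsum_(z <- T) F l z.
  move=> hL; apply: Rle_trans (F_lb L hL) _; apply: sumR_le => z.
  by rewrite /F; case: ifP => _; [lra | exact: hf].
elim: l => [|l IH] hl.
  by apply: sumR_ge0 => z; rewrite /F; case: ifP => _; [exact: hf | lra].
pose shell z := if (l1norm z == a + l)%N then f z else 0.
have -> : \rsum_(z <- T) F l.+1 z = \rsum_(z <- T) F l z + \rsum_(z <- T) shell z.
  rewrite -sumRD; apply: eq_bigr => z _; rewrite /F /shell.
  case: (eqVneq (l1norm z) (a + l)%N) => [->|hne].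
    by rewrite addnS ltnS leqnn ltnn leq_addr /=; ring.
  by rewrite addnS ltnS (leq_eqVlt (l1norm z)) (negbTE hne) /=; case: (_ && _); ring.
have inner : INR l <= \rsum_(z <- T) F l z.
  by apply: IH => r /andP [h1 h2]; apply: hl; rewrite h1 /= addnS ltnS ltnW.
have [z zT [hz hz1]] : exists2 z, z \in T & l1norm z = (a + l)%N /\ 1 <= f z.
  by apply: hl; rewrite leq_addr /= addnS ltnS leqnn.
have outer : 1 <= \rsum_(w <- T) shell w.
  apply: Rle_trans hz1 _; have := sumR_ge_term (F := shell) uT zT.
  by rewrite /shell hz eqxx; apply => w; case: ifP => _; [exact: hf | lra].
by rewrite S_INR; lra.
Qed.

Lemma alpha_ge0 d (mu : pt d -> R) x : 0 <= alpha mu x.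
Proof. exact: Rmax_r. Qed.

Lemma topple_self d (x : pt d) mu : topple x mu x = mu x - alpha mu x.
Proof. by rewrite /topple lap_delta_self; ring. Qed.

Lemma topple_self_le1 d (x : pt d) mu : topple x mu x <= 1.
Proof. by rewrite topple_self /alpha /Rmax; case: Rle_dec; lra. Qed.

Lemma topple_other d (x z : pt d) mu : z != x -> mu z <= topple x mu z.
Proof.
move=> hz; rewrite /topple.
have := Rmult_le_pos _ _ (alpha_ge0 mu x) (lap_delta_ge0 hz); lra.
Qed.

Lemma topple_out d (x z : pt d) mu : z \notin nbh x -> topple x mu z = mu z.
Proof. by move=> hz; rewrite /topple lap_delta_out // Rmult_0_r Rplus_0_r. Qed.

Lemma topple_ge0 d (x : pt d) mu : (forall z, 0 <= mu z) -> forall z, 0 <= topple x mu z.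
Proof.
move=> h z; case: (eqVneq z x) => [->|hz].
  by rewrite topple_self /alpha /Rmax; have := h x; case: Rle_dec; lra.
by have := topple_other mu hz; have := h z; lra.
Qed.

Definition visited d (s0 : seq (pt d)) (xs : nat -> pt d) k : seq (pt d) :=
  undup (s0 ++ flatten [seq nbh (xs j) | j <- iota 0 k]).

Lemma visited_uniq d (s0 : seq (pt d)) xs k : uniq (visited s0 xs k).
Proof. exact: undup_uniq. Qed.

Lemma visited_s0 d (s0 : seq (pt d)) xs k : {subset s0 <= visited s0 xs k}.
Proof. by move=> z h; rewrite mem_undup mem_cat h. Qed.

Lemma visited_nbh d (s0 : seq (pt d)) xs k j :
  (j < k)%N -> {subset nbh (xs j) <= visited s0 xs k}.
Proof.
move=> hj z hz; rewrite mem_undup mem_cat; apply/orP; right; apply/flatten_mapP.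
by exists j => //; rewrite mem_iota.
Qed.

Lemma visited_mono d (s0 : seq (pt d)) xs k : {subset visited s0 xs k <= visited s0 xs k.+1}.
Proof.
move=> z; rewrite mem_undup mem_cat => /orP [/visited_s0 //|/flatten_mapP [j hj hz]].
by apply: visited_nbh hz; move: hj; rewrite mem_iota add0n => /andP [_ /ltnW].
Qed.

Section Odometer.

Variables (d : nat) (mu0 : pt d -> R) (xs : nat -> pt d).

Local Notation mu := (mu_seq mu0 xs).
Local Notation u := (u_seq mu0 xs).
Local Notation emit k := (alpha (mu k) (xs k)).

Lemma mu_ge0 : (forall z, 0 <= mu0 z) -> forall k z, 0 <= mu k z.
Proof. by move=> h; elim=> [|k IH] //=; exact: topple_ge0. Qed.

Lemma mu_step k : mu k.+1 = topple (xs k) (mu k).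
Proof. by []. Qed.

Lemma u_step k y : u k.+1 y = u k y + emit k * delta (xs k) y.
Proof. by rewrite /= /delta; case: eqP => [->|_]; ring. Qed.

Lemma u_ge0 k y : 0 <= u k y.
Proof.
elim: k => [|k IH]; first by rewrite /=; lra.
by rewrite u_step; have := Rmult_le_pos _ _ (alpha_ge0 (mu k) (xs k)) (delta_ge0 (xs k) y); lra.
Qed.

Lemma u_grow k y : u k y <= u k.+1 y.
Proof.
by rewrite u_step; have := Rmult_le_pos _ _ (alpha_ge0 (mu k) (xs k)) (delta_ge0 (xs k) y); lra.
Qed.

Lemma u_le_emitted k y : u k y <= \rsum_(j <- iota 0 k) emit j.
Proof.
elim: k => [|k IH]; first by rewrite big_nil /=; lra.
rewrite u_step -addn1 iotaD big_cat big_seq1 add0n /=.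
by have := alpha_ge0 (mu k) (xs k); rewrite /delta; case: eqP => _; lra.
Qed.

Lemma odometer_identity k y : mu k y = mu0 y + lap (u k) y.
Proof.
elim: k y => [|k IH] y.
  by rewrite /= (lap_ext (g := fun _ => 0)) // /lap big1 => [|i _]; lra.
rewrite (lap_ext (g := fun z => u k z + emit k * delta (xs k) z)); last exact: u_step.
by rewrite lap_lin /= /topple IH; ring.
Qed.

Lemma weighted_mass g k (T : seq (pt d)) : uniq T ->
  (forall j, (j < k)%N -> {subset nbh (xs j) <= T}) ->
  \rsum_(z <- T) (mu k z * g z) =
  \rsum_(z <- T) (mu0 z * g z) + \rsum_(j <- iota 0 k) (emit j * lap g (xs j)).
Proof.
move=> uT; elim: k => [|k IH] hT; first by rewrite big_nil Rplus_0_r.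
rewrite -addn1 iotaD big_cat big_seq1 add0n -Rplus_assoc -IH; last first.
  by move=> j hj; apply: hT; exact: leqW.
rewrite -(sum_lap_delta g uT (hT k (ltnSn k))) -sumRM -sumRD.
by apply: eq_bigr => z _; rewrite addn1 /= /topple; ring.
Qed.

(* A site that has toppled (u_k > 0) keeps mass at least 1 forever after:
   toppling leaves it with exactly 1, and other topplings only add mass. *)
Lemma occupied_full k z : 0 < u k z -> 1 <= mu k z.
Proof.
elim: k z => [|k IH] z; first by rewrite /=; lra.
rewrite u_step mu_step; case: (eqVneq z (xs k)) => [->|hz].
  rewrite topple_self /delta eqxx Rmult_1_r /alpha /Rmax.
  by case: Rle_dec => h1 h2; [have := IH (xs k); lra | lra].
rewrite /delta (negbTE hz) Rmult_0_r Rplus_0_r => /IH.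
by have := topple_other (mu k) hz; lra.
Qed.

Section InitialSupport.

Variable s0 : seq (pt d).
Hypothesis d_gt0 : (0 < d)%N.
Hypothesis mu0_ge0 : forall z, 0 <= mu0 z.
Hypothesis mu0_supp : forall z, mu0 z <> 0 -> z \in s0.

Local Notation T k := (visited s0 xs k).

Lemma mu_supp_visited k z : mu k z <> 0 -> z \in T k.
Proof.
elim: k z => [|k IH] z /=; first by move/mu0_supp; exact: visited_s0.
case: (boolP (z \in nbh (xs k))) => hz; first by move=> _; exact: visited_nbh hz.
by rewrite topple_out // => /IH; exact: visited_mono.
Qed.

(* Conservation of mass: the case g = 1 of the weighted mass identity. *)
Lemma total_mass k : \rsum_(z <- T k) mu k z = \rsum_(z <- undup s0) mu0 z.
Proof.
have := weighted_mass (fun _ => 1) (visited_uniq s0 xs k) (@visited_nbh _ s0 xs k).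
rewrite [\rsum_(j <- iota 0 k) _]big1 => [|j _]; last by rewrite lap_const // Rmult_0_r.
under eq_bigr => z _ do rewrite Rmult_1_r.
under [X in _ = X + _]eq_bigr => z _ do rewrite Rmult_1_r.
rewrite Rplus_0_r => ->; apply: sumR_supp => //; first exact: visited_uniq.
exact: visited_s0.
Qed.

Lemma mu_supp_occupied k z : mu k z <> 0 ->
  z \in s0 \/ exists2 z', 0 < u k z' & z \in nbh z'.
Proof.
elim: k z => [|k IH] z; first by move/mu0_supp; left.
rewrite mu_step; case: (Req_dec (mu k z) 0) => hm; last first.
  move=> _; case: (IH z hm) => [|[z' hz' hn]]; first by left.
  by right; exists z' => //; have := u_grow k z'; lra.
rewrite /topple hm Rplus_0_l => hne; right; exists (xs k).
  rewrite u_step /delta eqxx; have := u_ge0 k (xs k); have := alpha_ge0 (mu k) (xs k).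
  by case: (Req_dec (emit k) 0) => [e|]; [rewrite e Rmult_0_l in hne | lra].
by apply/negPn/negP => hz; apply: hne; rewrite lap_delta_out // Rmult_0_r.
Qed.

Local Notation rad0 := (\max_(w <- s0) l1norm w)%N.

(* A site first occupied at
   step k is x_k, which carried mass, hence lies in s0 or next to an older
   occupied site. *)
Lemma occupied_shells k z : 0 < u k z ->
  forall r, (rad0 < r <= l1norm z)%N -> exists2 z', 0 < u k z' & l1norm z' = r.
Proof.
elim: k z => [|k IH] z; first by rewrite /=; lra.
move=> hu r /andP [hr hrz].
have grow z' : 0 < u k z' -> 0 < u k.+1 z' by have := u_grow k z'; lra.
case: (Rlt_le_dec 0 (u k z)) => hk.
  by case: (IH z hk r); [rewrite hr hrz | move=> z' /grow h1 h2; exists z'].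
have hz : z = xs k.
  by move: hu; rewrite u_step /delta; case: eqP => // _; have := u_ge0 k z; lra.
case: (eqVneq r (l1norm z)) => [->|hne]; first by exists z.
have hm : mu k z <> 0.
  by move: hu; rewrite u_step /delta -hz eqxx /alpha /Rmax; case: Rle_dec; lra.
have hlt : (r < l1norm z)%N by rewrite ltn_neqAle hne hrz.
case: (mu_supp_occupied hm) => [hs|[z'' hu'' hn]].
  have := @leq_bigmax_seq _ _ _ (@l1norm d) _ hs isT.
  by rewrite leqNgt (ltn_trans hr hlt).
have hr'' : (r <= l1norm z'')%N.
  by rewrite -ltnS -(addn1 (l1norm z'')); exact: leq_trans hlt (l1norm_nbh hn).
by case: (IH z'' hu'' r); [rewrite hr hr'' | move=> z' /grow h1 h2; exists z'].
Qed.

Local Notation M := (\rsum_(z <- undup s0) mu0 z).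

(* Occupied sites stay in a fixed l1 ball: an occupied site beyond radius rad0 + n
   yields n shells each holding a unit of mass, so n <= M by conservation. *)
Lemma occupied_l1norm_bound :
  exists n, forall k z, 0 < u k z -> (l1norm z <= rad0 + n)%N.
Proof.
have [n hn] : exists n : nat, INR n * 1 > M by apply: INR_archimed; lra.
exists n => k z hz; rewrite leqNgt; apply/negP => hfar.
suff : INR n <= \rsum_(w <- T k) mu k w by rewrite total_mass; lra.
apply: (@shells_mass_lb _ _ _ rad0.+1); [exact: visited_uniq | exact: mu_ge0 |].
move=> r /andP [hr hrn]; have [z' hz' <-] : exists2 z', 0 < u k z' & l1norm z' = r.
  by apply: (occupied_shells hz); rewrite hr /=; apply: ltnW; apply: leq_trans hrn hfar.
have hfull := occupied_full hz'.
by exists z' => //; apply: mu_supp_visited; lra.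
Qed.

Lemma mu_l1norm_bound : exists B, forall k z, mu k z <> 0 -> (l1norm z <= B)%N.
Proof.
have [n hn] := occupied_l1norm_bound.
exists (rad0 + n + 1)%N => k z /mu_supp_occupied [hs|[z' hz' hnb]].
  apply: leq_trans (@leq_bigmax_seq _ _ _ (@l1norm d) _ hs isT) _.
  by rewrite -addnA leq_addr.
by apply: leq_trans (l1norm_nbh hnb) _; rewrite leq_add2r; exact: hn hz'.
Qed.

(* The emitted mass is controlled by the second moment of mu_k: the case
   g = |z|^2, Delta g = 1, of the weighted mass identity. *)
Lemma emitted_le_moment k :
  \rsum_(j <- iota 0 k) emit j <= \rsum_(z <- T k) (mu k z * sqnorm z).
Proof.
rewrite (weighted_mass _ (visited_uniq s0 xs k) (@visited_nbh _ s0 xs k)).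
under [X in _ <= _ + X]eq_bigr => j _ do rewrite lap_sqnorm // Rmult_1_r.
have : 0 <= \rsum_(z <- T k) (mu0 z * sqnorm z).
  by apply: sumR_ge0 => z; apply: Rmult_le_pos; [exact: mu0_ge0 | exact: sqnorm_ge0].
lra.
Qed.

Lemma u_bounded : exists C, forall k y, u k y <= C.
Proof.
have [B hB] := mu_l1norm_bound; pose Q := INR d * (INR B * INR B).
exists (Q * M) => k y; apply: Rle_trans (u_le_emitted k y) _.
apply: Rle_trans (emitted_le_moment k) _.
rewrite -(total_mass k) -sumRM; apply: sumR_le => z.
have := mu_ge0 mu0_ge0 k z.
case: (Req_dec (mu k z) 0) => [->|hm]; first by rewrite Rmult_0_l Rmult_0_r; lra.
suff : sqnorm z <= Q by nra.
apply: Rle_trans (sqnorm_le_l1norm z) _; apply: Rmult_le_compat_l; first exact: pos_INR.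
have hzB : INR (l1norm z) <= INR B by apply/le_INR/leP; exact: hB hm.
by apply: Rmult_le_compat => //; exact: pos_INR.
Qed.

End InitialSupport.

End Odometer.

Lemma cv_const c : Un_cv (fun _ : nat => c) c.
Proof. by move=> eps he; exists O => n _; rewrite R_dist_eq. Qed.

Lemma cv_ext (u v : nat -> R) l : (forall k, u k = v k) -> Un_cv u l -> Un_cv v l.
Proof. by move=> h hu eps he; have [N hN] := hu eps he; exists N => n hn; rewrite -h; exact: hN. Qed.

Lemma cv_sum (I : Type) (r : seq I) (F : nat -> I -> R) (l : I -> R) :
  (forall i, Un_cv (fun k => F k i) (l i)) ->
  Un_cv (fun k => \rsum_(i <- r) F k i) (\rsum_(i <- r) l i).
Proof.
move=> h; elim: r => [|a r IH].
  by rewrite big_nil; apply: cv_ext (cv_const _) => k; rewrite big_nil.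
by rewrite big_cons; apply: cv_ext (CV_plus _ _ _ _ (h a) IH) => k; rewrite big_cons.
Qed.

(* Delta f(x) involves finitely many values of f, so it passes to pointwise limits. *)
Lemma cv_lap d (f : nat -> pt d -> R) (g : pt d -> R) x :
  (forall z, Un_cv (fun k => f k z) (g z)) -> Un_cv (fun k => lap (f k) x) (lap g x).
Proof.
move=> h; rewrite /lap; apply: CV_minus => //; apply: CV_mult; first exact: cv_const.
apply: (@cv_sum _ _ (fun k i => f k (shift x i 1%R) + f k (shift x i (-1)%R))
                (fun i => g (shift x i 1%R) + g (shift x i (-1)%R))) => i.
exact: CV_plus.
Qed.

Lemma cv_le1_frequently (v : nat -> R) l : Un_cv v l ->
  (forall N, exists k, (N <= k)%N /\ v k <= 1) -> l <= 1.
Proof.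
move=> hv hk; apply: Rnot_lt_le => hl.
have [N hN] := hv (l - 1) ltac:(lra).
have [k [hNk hvk]] := hk N.
have := hN k ltac:(apply/leP; exact: hNk).
by rewrite /R_dist => h; have := Rle_abs (l - v k); rewrite Rabs_minus_sym; lra.
Qed.

Close Scope R_scope.

Theorem lemma3p1 (d : nat) (hd : (0 < d)%N) (mu0 : pt d -> R)
  (hnn : forall y, Rle R0 (mu0 y))
  (hfin : exists s : seq (pt d), forall y, mu0 y <> R0 -> y \in s)
  (xs : nat -> pt d)
  (hinf : forall (x : pt d) (N : nat), exists k, (N <= k)%N /\ xs k = x) :
  exists u : pt d -> R,
    (forall y, Un_growing (fun k => u_seq mu0 xs k y)) /\
    (forall y, Un_cv (fun k => u_seq mu0 xs k y) (u y)) /\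
    (forall y, Un_cv (fun k => mu_seq mu0 xs k y) (Rplus (mu0 y) (lap u y))) /\
    (forall y, Rle (Rplus (mu0 y) (lap u y)) R1).
Proof.
have [s0 mu0_supp] := hfin.
have [C hC] := u_bounded xs hd hnn mu0_supp.
have grow y : Un_growing (fun k => u_seq mu0 xs k y) by move=> k; exact: u_grow.
have ub y : has_ub (fun k => u_seq mu0 xs k y) by exists C => _ [k ->]; exact: hC.
pose u y := proj1_sig (growing_cv _ (grow y) (ub y)).
have cv_u y : Un_cv (fun k => u_seq mu0 xs k y) (u y) by rewrite /u; case: growing_cv.
have cv_mu y : Un_cv (fun k => mu_seq mu0 xs k y) (Rplus (mu0 y) (lap u y)).
  apply: cv_ext (CV_plus _ _ _ _ (cv_const (mu0 y)) (cv_lap y cv_u)) => k.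
  by rewrite odometer_identity.
exists u; split => //; split => //; split => // y.
(* Right after each of its infinitely many topplings, y holds mass <= 1. *)
apply: cv_le1_frequently (cv_mu y) _ => N.
have [k [hk <-]] := hinf y N.
by exists k.+1; split; [exact: leqW | exact: topple_self_le1].
Qed.
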